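(* Let $a\in\mathbb F^*$ and suppose $x^n-a$ lies in the center of $\mathcal R$ (so that $\mathcal S_a$ is a ring). Then $M^\theta_a(\overline{fg})=M^\theta_a(\overline f)\,M^\theta_a(\overline g)$ for all $f,g\in\mathcal R$. Hence $M^\theta_a$ is a ring isomorphism between $\mathcal S_a$ and the subring $M^\theta_a(\mathcal S_a)$ of $\mathbb F^{n\times n}$.
   Context: $\mathbb F$ is a finite field, $\theta\in\mathrm{Aut}(\mathbb F)$, $\mathcal R=\mathbb F[x;\theta]$ the skew polynomial ring (elements $\sum f_ix^i$ with left coefficients, $xb=\theta(b)x$). Fix $n\in\mathbb N$. $\mathcal S_a=\mathcal R/\mathcal R(x^n-a)$, $\overline f$ the coset of $f$. $\mathfrak v_a:\mathcal S_a\to\mathbb F^n$ is the inverse of $(c_0,\dots,c_{n-1})\mapsto\overline{\sum_{i=0}^{n-1}c_ix^i}$. The map $M^\theta_a:\mathcal S_a\to\mathbb F^{n\times n}$ sends $\overline f$ to the matrix whose row with index $i$ ($0\le i\le n-1$) is $\mathfrak v_a(\overline{x^if})$. *)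

From HB Require Import structures.
From mathcomp Require Import all_boot all_order all_algebra all_field.
Set Implicit Arguments. Unset Strict Implicit. Unset Printing Implicit Defensive.
Import GRing.Theory.
Local Open Scope ring_scope.

(* Skew polynomial ring F[x; theta]: an element sum_i f_i x^i (left
   coefficients) is represented by the polynomial p : {poly F} with
   p`_i = f_i.  Only the multiplication differs: x b = theta(b) x. *)

Section Skew.
Variable F : finFieldType.
Variable theta : {rmorphism F -> F}.

(* (sum_i p_i x^i) * q = sum_i p_i x^i q = sum_i p_i (theta^i q) x^i *)
Definition skmul (p q : {poly F}) : {poly F} :=
  \sum_(i < size p) (p`_i *: ('X^i * map_poly (iter i theta) q)).

Definition xna (n : nat) (a : F) : {poly F} := 'X^n - a%:P.

(* One reduction step modulo the left ideal R(x^n - a): cancel the leading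
   term c x^k (k >= n) by subtracting (c x^(k-n)) * (x^n - a). *)
Definition red_step (n : nat) (a : F) (p : {poly F}) : {poly F} :=
  if (size p <= n)%N then p
  else p - skmul (lead_coef p *: 'X^((size p).-1 - n)) (xna n a).

(* Remainder of right division by x^n - a: the unique r of degree < n
   with f - r in R(x^n - a) (each step strictly lowers the size). *)
Definition skrem (n : nat) (a : F) (f : {poly F}) : {poly F} :=
  iter (size f) (red_step n a) f.

Definition vec_a (n : nat) (a : F) (f : {poly F}) : 'rV[F]_n :=
  \row_(j < n) (skrem n a f)`_j.

Definition Mtheta (n : nat) (a : F) (f : {poly F}) : 'M[F]_n :=
  \matrix_(i < n, j < n) (skrem n a (skmul 'X^i f))`_j.

(* f and g have the same coset in S_a = R / R(x^n - a). *)
Definition skcong (n : nat) (a : F) (f g : {poly F}) : Prop :=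
  exists h : {poly F}, f - g = skmul h (xna n a).

End Skew.

From HB Require Import structures.
From mathcomp Require Import all_boot all_order all_algebra all_field.
From mathcomp Require Import zify.
Set Implicit Arguments. Unset Strict Implicit. Unset Printing Implicit Defensive.
Import GRing.Theory.
Local Open Scope ring_scope.

(* Right division by the monic x^n - a (n > 0) leaves a unique remainder of
   degree < n, and f, g are congruent modulo R(x^n - a) iff their remainders
   agree; row i of M(f) holds the remainder of x^i f.  Write
   x^i f = sum_k M(f)_ik x^k + h (x^n - a).  As x^n - a is central, the left
   ideal is also stable under right multiplication, so x^i f g is congruent to
   sum_k M(f)_ik x^k g, whose remainder is row i of M(f) M(g). *)

Section SkewPolynomials.
Variable F : finFieldType.
Variable theta : {rmorphism F -> F}.
Local Notation sk := (skmul theta).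
Local Notation twist i := (map_poly (iter i theta)).

(* [iter i theta] packaged as a ring morphism, to reuse the map_poly theory. *)
Fixpoint theta_iter (i : nat) : {rmorphism F -> F} :=
  if i is i'.+1 then (theta \o theta_iter i' : {rmorphism F -> F})
  else (idfun : {rmorphism F -> F}).

Lemma theta_iterE i x : theta_iter i x = iter i theta x.
Proof. by elim: i => //= i ->. Qed.

Lemma twistE i (p : {poly F}) : twist i p = map_poly (theta_iter i) p.
Proof. by apply: eq_map_poly => x; rewrite theta_iterE. Qed.

Lemma twistD i (p q : {poly F}) : twist i (p + q) = twist i p + twist i q.
Proof. by rewrite !twistE rmorphD. Qed.

Lemma twistB i (p q : {poly F}) : twist i (p - q) = twist i p - twist i q.
Proof. by rewrite !twistE rmorphB. Qed.

Lemma twistM i (p q : {poly F}) : twist i (p * q) = twist i p * twist i q.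
Proof. by rewrite !twistE rmorphM. Qed.

Lemma twistZ i c (p : {poly F}) : twist i (c *: p) = iter i theta c *: twist i p.
Proof. by rewrite !twistE map_polyZ theta_iterE. Qed.

Lemma twistXn i k : twist i ('X^k : {poly F}) = 'X^k.
Proof. by rewrite twistE map_polyXn. Qed.

Lemma twist_comp i j (p : {poly F}) : twist i (twist j p) = twist (i + j) p.
Proof.
rewrite !twistE -map_poly_comp; apply: eq_map_poly => x /=.
by rewrite !theta_iterE iterD.
Qed.

Lemma twist_sum i I (r : seq I) (P : pred I) (G : I -> {poly F}) :
  twist i (\sum_(k <- r | P k) G k) = \sum_(k <- r | P k) twist i (G k).
Proof. by rewrite twistE rmorph_sum; apply: eq_bigr => k _; rewrite twistE. Qed.

Lemma skmul_widen N (p q : {poly F}) : (size p <= N)%N ->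
  sk p q = \sum_(i < N) p`_i *: ('X^i * twist i q).
Proof.
move=> le_pN; rewrite /skmul (big_ord_widen N (fun i => p`_i *: ('X^i * twist i q)) le_pN).
rewrite big_mkcond /=; apply: eq_bigr => i _; case: ifP => // /negbT.
by rewrite -leqNgt => le_pi; rewrite nth_default // scale0r.
Qed.
Arguments skmul_widen N p q : clear implicits.

Lemma skmul0l (q : {poly F}) : sk 0 q = 0.
Proof. by rewrite /skmul size_poly0 big_ord0. Qed.

Lemma skmulDl (p q r : {poly F}) : sk (p + q) r = sk p r + sk q r.
Proof.
set N := maxn (size p) (size q).
rewrite !(skmul_widen N) ?leq_maxl ?leq_maxr ?size_polyD // -big_split.
by apply: eq_bigr => i _; rewrite coefD scalerDl.
Qed.

Lemma skmulZl c (p q : {poly F}) : sk (c *: p) q = c *: sk p q.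
Proof.
rewrite !(skmul_widen (size p)) ?size_scale_leq // scaler_sumr.
by apply: eq_bigr => i _; rewrite coefZ scalerA.
Qed.

Lemma skmulNl (p q : {poly F}) : sk (- p) q = - sk p q.
Proof. by rewrite -scaleN1r skmulZl scaleN1r. Qed.

Lemma skmulBl (p q r : {poly F}) : sk (p - q) r = sk p r - sk q r.
Proof. by rewrite skmulDl skmulNl. Qed.

Lemma skmulDr (p q r : {poly F}) : sk p (q + r) = sk p q + sk p r.
Proof.
rewrite !(skmul_widen (size p)) // -big_split; apply: eq_bigr => i _.
by rewrite twistD mulrDr scalerDr.
Qed.

Lemma skmulBr (p q r : {poly F}) : sk p (q - r) = sk p q - sk p r.
Proof.
rewrite !(skmul_widen (size p)) // -sumrB; apply: eq_bigr => i _.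
by rewrite twistB mulrBr scalerBr.
Qed.

Lemma skmul_suml I (r : seq I) (P : pred I) (G : I -> {poly F}) (q : {poly F}) :
  sk (\sum_(k <- r | P k) G k) q = \sum_(k <- r | P k) sk (G k) q.
Proof. by apply: (big_morph (sk^~ q)) => [p p'|]; rewrite ?skmulDl ?skmul0l. Qed.

Lemma skmulXn i (q : {poly F}) : sk 'X^i q = 'X^i * twist i q.
Proof.
rewrite (skmul_widen i.+1) ?size_polyXn // big_ord_recr /= big1 ?add0r.
  by rewrite coefXn eqxx scale1r.
by move=> k _; rewrite coefXn ltn_eqF // scale0r.
Qed.

Lemma skmul1l (q : {poly F}) : sk 1 q = q.
Proof. by rewrite -(expr0 'X) skmulXn map_poly_id // expr0 mul1r. Qed.

Lemma skmul_monomialA i (q r : {poly F}) :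
  sk ('X^i * twist i q) r = 'X^i * twist i (sk q r).
Proof.
rewrite (skmul_widen (size q) q r) // twist_sum mulr_sumr.
rewrite -{1}(coefK q) poly_def twist_sum mulr_sumr skmul_suml.
apply: eq_bigr => j _.
rewrite twistZ twistXn -scalerAr -exprD skmulZl skmulXn twistZ twistM twistXn.
by rewrite twist_comp -!scalerAr mulrA -exprD.
Qed.

Lemma skmulA (p q r : {poly F}) : sk (sk p q) r = sk p (sk q r).
Proof.
rewrite (skmul_widen (size p) p q) // (skmul_widen (size p) p) // skmul_suml.
by apply: eq_bigr => i _; rewrite skmulZl skmul_monomialA.
Qed.

Section Congruence.
Variables (n : nat) (a : F).
Local Notation m := (xna n a).
Local Notation cong := (skcong theta n a).

Lemma skcong_refl (f : {poly F}) : cong f f.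
Proof. by exists 0; rewrite subrr skmul0l. Qed.

Lemma skcong_sym (f g : {poly F}) : cong f g -> cong g f.
Proof. by case=> h fgE; exists (- h); rewrite skmulNl -fgE opprB. Qed.

Lemma skcong_trans (f g k : {poly F}) : cong f g -> cong g k -> cong f k.
Proof.
case=> h1 E1 [h2 E2]; exists (h1 + h2).
by rewrite skmulDl -E1 -E2 addrA subrK.
Qed.

Lemma skcongD (f1 f2 g1 g2 : {poly F}) :
  cong f1 g1 -> cong f2 g2 -> cong (f1 + f2) (g1 + g2).
Proof.
case=> h1 E1 [h2 E2]; exists (h1 + h2).
by rewrite skmulDl -E1 -E2 opprD addrACA.
Qed.

Lemma skcongZ c (f g : {poly F}) : cong f g -> cong (c *: f) (c *: g).
Proof. by case=> h E; exists (c *: h); rewrite skmulZl -E scalerBr. Qed.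

Lemma skcong_skmull (p f g : {poly F}) : cong f g -> cong (sk p f) (sk p g).
Proof. by case=> h E; exists (sk p h); rewrite -skmulBr E skmulA. Qed.

Lemma skcong_skmulr (q f g : {poly F}) :
  (forall p, sk p m = sk m p) -> cong f g -> cong (sk f q) (sk g q).
Proof.
move=> central [h E]; exists (sk h q).
by rewrite -skmulBl E !skmulA central.
Qed.

End Congruence.

Section Remainder.
Variables (n : nat) (a : F).
Hypothesis n_gt0 : (0 < n)%N.
Local Notation m := (xna n a).
Local Notation cong := (skcong theta n a).
Local Notation rs := (red_step theta n a).
Local Notation rem := (skrem theta n a).

Lemma skmul_xna (h : {poly F}) :
  sk h m = h * 'X^n - \poly_(i < size h) (h`_i * iter i theta a).
Proof.
have hXnE : h * 'X^n = \sum_(i < size h) h`_i *: 'X^(i + n).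
  rewrite -{1}(coefK h) poly_def mulr_suml; apply: eq_bigr => i _.
  by rewrite -scalerAl -exprD.
rewrite (skmul_widen (size h)) // poly_def hXnE -sumrB; apply: eq_bigr => i _.
rewrite /xna twistB twistXn twistE map_polyC /= theta_iterE.
by rewrite mulrBr -exprD scalerBr mulrC mul_polyC scalerA.
Qed.

Lemma size_skmul_xna (h : {poly F}) : h != 0 -> size (sk h m) = (n + size h)%N.
Proof.
move=> h_nz; rewrite skmul_xna size_polyDl; first exact: size_mulXn.
rewrite size_polyN (size_mulXn n h_nz).
by apply: leq_ltn_trans (size_poly _ _) _; lia.
Qed.

Lemma skcong_small (r s : {poly F}) :
  (size r <= n)%N -> (size s <= n)%N -> cong r s -> r = s.
Proof.
move=> le_rn le_sn [h rsE]; apply/eqP; rewrite -subr_eq0 rsE.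
have [-> | h_nz] := eqVneq h 0; first by rewrite skmul0l.
have : (size (r - s)%R <= n)%N.
  by apply: leq_trans (size_polyD _ _) _; rewrite size_polyN geq_max le_rn.
by rewrite rsE size_skmul_xna //; move: h_nz; rewrite -size_poly_gt0; lia.
Qed.

(* The step subtracts (lc p) x^(d-n) (x^n - a), killing the top coefficient
   at degree d = deg p. *)
Lemma size_red_step (p : {poly F}) : (size (rs p) <= maxn n (size p).-1)%N.
Proof.
rewrite /red_step; case: ifP => [le_pn | /negbT]; first by lia.
rewrite -ltnNge => lt_np; set d := (size p).-1.
have dE : ((d - n) + n = d)%N by rewrite /d; lia.
rewrite skmulZl skmulXn /xna twistB twistXn twistE map_polyC /=.
rewrite mulrBr -exprD dE mulrC mul_polyC.
have -> : maxn n d = d by lia.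
apply/leq_sizeP => j le_dj.
rewrite coefB coefZ coefB coefZ !coefXn.
have -> : (j == (d - n)%N) = false by apply/negbTE; lia.
rewrite mulr0 subr0.
have [-> | ne_jd] := eqVneq j d; first by rewrite mulr1 -lead_coefE subrr.
rewrite mulr0 subr0 nth_default //.
by move/eqP: ne_jd; move: lt_np le_dj; rewrite /d; case: (size p) => /=; lia.
Qed.

Lemma red_step_cong (p : {poly F}) : cong p (rs p).
Proof.
rewrite /red_step; case: ifP => _; first exact: skcong_refl.
by eexists; rewrite opprB addrC subrK.
Qed.

Lemma size_iter_red_step k (f : {poly F}) :
  (size (iter k rs f) <= maxn n (size f - k))%N.
Proof.
elim: k => [|k IH] /=; first by rewrite subn0 leq_maxr.
by have := size_red_step (iter k rs f); move: IH; case: (size _) => /=; lia.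
Qed.

Lemma size_skrem (f : {poly F}) : (size (rem f) <= n)%N.
Proof. by have := size_iter_red_step (size f) f; rewrite /skrem; lia. Qed.

Lemma skrem_cong (f : {poly F}) : cong f (rem f).
Proof.
rewrite /skrem; elim: (size f) => [|k IH] /=; first exact: skcong_refl.
exact: skcong_trans IH (red_step_cong _).
Qed.

Lemma skrem_uniq (f r : {poly F}) : (size r <= n)%N -> cong f r -> rem f = r.
Proof.
move=> le_rn fr; apply: skcong_small => //; first exact: size_skrem.
exact: skcong_trans (skcong_sym (skrem_cong f)) fr.
Qed.

Lemma skcongP (f g : {poly F}) : cong f g <-> rem f = rem g.
Proof.
split=> [fg | remE].
  by apply: skrem_uniq; [exact: size_skrem | exact: skcong_trans fg (skrem_cong g)].
by apply: skcong_trans (skrem_cong f) _; rewrite remE; exact: skcong_sym (skrem_cong g).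
Qed.

Lemma skrem_small (r : {poly F}) : (size r <= n)%N -> rem r = r.
Proof. by move=> le_rn; apply: skrem_uniq => //; exact: skcong_refl. Qed.

Lemma skremD (f g : {poly F}) : rem (f + g) = rem f + rem g.
Proof.
apply: skrem_uniq; last exact: skcongD (skrem_cong f) (skrem_cong g).
by apply: leq_trans (size_polyD _ _) _; rewrite geq_max !size_skrem.
Qed.

Lemma skremZ c (f : {poly F}) : rem (c *: f) = c *: rem f.
Proof.
apply: skrem_uniq; last exact: skcongZ (skrem_cong f).
exact: leq_trans (size_scale_leq _ _) (size_skrem f).
Qed.

Lemma skrem_sum I (r : seq I) (P : pred I) (G : I -> {poly F}) :
  rem (\sum_(k <- r | P k) G k) = \sum_(k <- r | P k) rem (G k).
Proof. by apply: (big_morph _ skremD); rewrite skrem_small ?size_poly0. Qed.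

Local Notation M := (Mtheta theta n a).

Lemma Mtheta_row0 (f : {poly F}) (j : 'I_n) : M f (Ordinal n_gt0) j = (rem f)`_j.
Proof. by rewrite mxE expr0 skmul1l. Qed.

Lemma MthetaD (f g : {poly F}) : M (f + g) = M f + M g.
Proof. by apply/matrixP => i j; rewrite !mxE skmulDr skremD coefD. Qed.

Lemma Mtheta1 : M 1 = 1%:M.
Proof.
apply/matrixP => i j; rewrite !mxE skmulXn twistE rmorph1 mulr1.
by rewrite skrem_small ?size_polyXn // coefXn eq_sym.
Qed.

Lemma Mtheta_eqP (f g : {poly F}) : M f = M g <-> cong f g.
Proof.
split=> [Mfg | fg].
  apply/skcongP/polyP => j; have [lt_jn | le_nj] := ltnP j n.
    by rewrite -!(Mtheta_row0 _ (Ordinal lt_jn)) Mfg.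
  by rewrite !nth_default // (leq_trans (size_skrem _)).
apply/matrixP => i j; rewrite !mxE.
by have /skcongP -> := skcong_skmull 'X^i fg.
Qed.

Lemma MthetaM (f g : {poly F}) :
  (forall p, sk p m = sk m p) -> M (sk f g) = M f *m M g.
Proof.
move=> central; apply/matrixP => i j; rewrite !mxE -skmulA.
have /skcongP -> := skcong_skmulr g central (skrem_cong (sk 'X^i f)).
rewrite (skmul_widen n) ?size_skrem // skrem_sum coef_sum.
by apply: eq_bigr => k _; rewrite -skmulXn skremZ coefZ !mxE.
Qed.

End Remainder.
End SkewPolynomials.

Theorem theorem3p6 (F : finFieldType) (theta : {rmorphism F -> F})
  (theta_aut : bijective theta) (n : nat) (n_gt0 : (0 < n)%N) (a : F)
  (a_nz : a != 0)
  (central : forall f : {poly F},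
      skmul theta f (xna n a) = skmul theta (xna n a) f) :
  (forall f g : {poly F},
      Mtheta theta n a (skmul theta f g)
      = Mtheta theta n a f *m Mtheta theta n a g)
  /\ (forall f g : {poly F},
      Mtheta theta n a (f + g) = Mtheta theta n a f + Mtheta theta n a g)
  /\ Mtheta theta n a 1 = 1%:M
  /\ (forall f g : {poly F},
      Mtheta theta n a f = Mtheta theta n a g <-> skcong theta n a f g).
Proof.
split; first by move=> f g; exact: MthetaM.
split; first exact: MthetaD.
split; first exact: Mtheta1.
exact: Mtheta_eqP.
Qed.
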